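(* Let $S$ be a primitive substitution over a finite alphabet $\mathcal{A}$ with linear repetitivity constant $C_S$ and Perron–Frobenius eigenvalue $\theta_S$, let $r\in\mathbb{N}$ and $\omega_0\in\mathcal{A}^{\mathbb{Z}}$. (1) If $n\ge N_1(r):=\frac{\log r}{\log\theta_S}+\frac{\log C_S-\log\check C(S)}{\log\theta_S}$, then $W(\Omega_n(\omega_0))_r\supseteq W(S)_r$. (2) If $\omega_0$ is a good approximant and $n>N_2(r):=\frac{\log r}{\log\theta_S}-\frac{\log(2\check C(S))}{\log\theta_S}+|\mathcal{A}|^2$, then $W(\Omega_n(\omega_0))_r\subseteq W(S)_r$.
   Context: Words are finite strings over $\mathcal{A}$; $u\prec w$ means contiguous subword; $|u|$ is length. A substitution $S:\mathcal{A}\to\mathcal{A}^+$ extends to words and configurations $\omega:\mathbb{Z}\to\mathcal{A}$ by concatenation (with $S(\omega(0))$ starting at $0$); it is primitive if for some $p$, every letter occurs in $S^p(a)$ for every $a$. $\theta_S$ is the Perron–Frobenius eigenvalue of the substitution matrix (entry $(i,j)$ = number of occurrences of $a_i$ in $S(a_j)$). $\check C(S),\hat C(S)>0$ are fixed constants with $\check C(S)\theta_S^n\le|S^n(a)|\le\hat C(S)\theta_S^n$ for all $a\in\mathcal{A}$, $n\in\mathbb{N}$. Legal words $W(S)$: subwords of some $S^n(a)$. $C_S\ge1$ is a linear repetitivity constant: for all $u,w\in W(S)$ with $|w|\ge C_S|u|$, $u\prec w$. For a subshift $\Omega$, $W(\Omega)$ is the set of finite subwords of its elements and $W(\cdot)_r$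 the subset of length-$r$ words. $\Omega_n(\omega_0)$ is the closure of the shift-orbit of $S^n(\omega_0)$. $G(S)$ is the directed graph on $\mathcal{A}^2$ with edge $u\to w$ iff $u,w\notin W(S)$ and $w\prec S(u)$; $\omega_0$ is a good approximant if every directed path in $G(S)$ starting at a length-$2$ subword of $\omega_0$ contains no closed subpath. *)

From mathcomp Require Import all_boot all_order all_algebra.
From mathcomp Require Import reals exp.
Set Implicit Arguments.
Unset Strict Implicit.
Unset Printing Implicit Defensive.
Import Order.TTheory GRing.Theory Num.Theory.
Local Open Scope ring_scope.

Section SubstDefs.
Variable A : finType.

Definition subst_word (S : A -> seq A) (w : seq A) : seq A := flatten (map S w).
Definition subst_iter (S : A -> seq A) (n : nat) (w : seq A) : seq A :=
  iter n (subst_word S) w.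

Definition legal (S : A -> seq A) (u : seq A) : Prop :=
  exists (n : nat) (a : A), infix u (subst_iter S n [:: a]).

Definition primitive (S : A -> seq A) : Prop :=
  exists p : nat, forall a b : A, b \in subst_iter S p [:: a].

(* theta is the Perron-Frobenius eigenvalue of the substitution matrix
   M_{a,b} = #occurrences of a in S(b): positive eigenvalue with an
   entrywise positive eigenvector (M v = theta v). *)
Definition is_PF_eigenvalue (R : realType) (S : A -> seq A) (theta : R) : Prop :=
  0 < theta /\
  exists v : A -> R, (forall a, 0 < v a) /\
    forall a, \sum_(b : A) (count_mem a (S b))%:R * v b = theta * v a.

Definition lin_rep_const (R : realType) (S : A -> seq A) (C : R) : Prop :=
  forall u w : seq A, legal S u -> legal S w ->
    C * (size u)%:R <= (size w)%:R -> infix u w.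

Definition config := int -> A.

(* S applied to a configuration: S(x 0) starts at position 0, the blocks
   S(x 0) S(x 1) ... fill the nonnegative positions and
   ... S(x (-2)) S(x (-1)) fill the negative positions. (Assumes the images
   of S are nonempty.) *)
Definition subst_config (S : A -> seq A) (x : config) : config :=
  fun m => match m with
  | Posz k => nth (x 0) (subst_word S [seq x (Posz i) | i <- iota 0 k.+1]) k
  | Negz k => nth (x 0)
      (rev (subst_word S [seq x (Negz i) | i <- rev (iota 0 k.+1)])) k
  end.

Definition config_iter (S : A -> seq A) (n : nat) (x : config) : config :=
  iter n (subst_config S) x.

Definition occurs (u : seq A) (y : config) : Prop :=
  exists k : int, forall i : nat, (i < size u)%N -> y (k + i%:Z) = nth (y 0) u i.

(* y belongs to the closure (product topology) of the shift orbit of x *)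
Definition in_orbit_closure (x y : config) : Prop :=
  forall N : nat, exists k : int, forall m : int, `|m| <= N%:Z -> y m = x (m + k).

Definition W_orbit_r (x : config) (r : nat) (u : seq A) : Prop :=
  size u = r /\ exists y : config, in_orbit_closure x y /\ occurs u y.

Definition W_S_r (S : A -> seq A) (r : nat) (u : seq A) : Prop :=
  size u = r /\ legal S u.

Definition G_edge (S : A -> seq A) (u w : A * A) : Prop :=
  ~ legal S [:: u.1; u.2] /\ ~ legal S [:: w.1; w.2] /\
  infix [:: w.1; w.2] (subst_word S [:: u.1; u.2]).

Fixpoint G_path (S : A -> seq A) (v : A * A) (p : seq (A * A)) : Prop :=
  match p with
  | [::] => True
  | w :: p' => G_edge S v w /\ G_path S w p'
  end.

(* good approximant: every directed path starting at a length-2 subword of x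
   has no closed subpath, i.e. visits no vertex twice *)
Definition good_approximant (S : A -> seq A) (x : config) : Prop :=
  forall (v : A * A) (p : seq (A * A)),
    occurs [:: v.1; v.2] x -> G_path S v p -> uniq (v :: p).

End SubstDefs.

From mathcomp Require Import all_boot all_order all_algebra.
From mathcomp Require Import reals exp.
From mathcomp Require Import zify lra.
From Stdlib Require Import Classical ClassicalEpsilon.
Import Order.TTheory GRing.Theory Num.Theory.
Set Implicit Arguments.
Unset Strict Implicit.
Unset Printing Implicit Defensive.
Local Open Scope ring_scope.

(* (1) [S^n(x 0)] is a legal word of length at least [Cchk * theta^n]; by
   linear repetitivity it contains every legal word of length [r] as soon as
   this exceeds [CS * r].
   (2) Let [K = |A|^2 - |A|].  Tracing an illegal two-letter word of [S^K(x)]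
   back through its ancestors gives a path of length [K] in [G(S)] starting at
   a two-letter word of [x]; for a good approximant its [K + 1] vertices are
   distinct illegal pairs, but every letter has a legal successor, so there
   are at most [K] illegal pairs.  Hence all two-letter words of [S^K(x)] are
   legal.  Writing [S^n(x) = S^m(S^K(x))], a word of length [r] in [S^n(x)]
   lies in [S^m(c d)] for a two-letter word [c d] of [S^K(x)] as soon as the
   blocks [S^m(a)] are longer than [r - 1].  This holds for
   [m = (n - |A|^2) + |A|]: every [S^|A|(a)] has length at least [2], so
   [|S^m(a)| >= 2 * Cchk * theta^(n - |A|^2) > r]. *)

Section Configurations.
Variable A : finType.

Definition block_image (f : A -> seq A) (y z : config A) : Prop :=
  exists pos : int -> int,
    (forall a, pos (a + 1) = pos a + (size (f (y a)))%:Z) /\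
    (forall a j d, (j < size (f (y a)))%N -> z (pos a + j%:Z) = nth d (f (y a)) j).

Lemma block_image_id y : block_image (fun a => [:: a]) y y.
Proof. by exists id; split=> // a [|j] d // _; rewrite addr0. Qed.

Fixpoint window (z : config A) (b : int) (n : nat) : seq A :=
  if n is n'.+1 then z b :: window z (b + 1) n' else [::].

Lemma window_eq (z : config A) b v d :
  (forall j, (j < size v)%N -> z (b + j%:Z) = nth d v j) -> window z b (size v) = v.
Proof.
elim: v b => //= c v IH b zv; congr cons; first by have := zv 0%N erefl; rewrite addr0.
by apply: IH => j jv; rewrite -addrA -[1 + _]PoszD add1n zv.
Qed.

Lemma block_image_comp f g y z w :
  block_image f y z -> block_image g z w ->
  block_image (fun a => flatten (map g (f a))) y w.
Proof.
move=> [p1 [step1 blk1]] [p2 [step2 blk2]].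
have stepn n b : p2 (b + n%:Z) = p2 b + (size (flatten (map g (window z b n))))%:Z.
  elim: n b => [|n IH] b; first by rewrite !addr0.
  by rewrite -[n.+1]add1n PoszD addrA IH step2 /= size_cat PoszD addrA.
have blkn n b j d : (j < size (flatten (map g (window z b n))))%N ->
    w (p2 b + j%:Z) = nth d (flatten (map g (window z b n))) j.
  elim: n b j => [|n IH] b j //=; rewrite size_cat nth_cat => jlt.
  case: ltnP => jz; first exact: blk2.
  rewrite -(IH (b + 1) (j - size (g (z b)))%N); last by lia.
  by rewrite step2 -addrA -PoszD subnKC.
have win a : window z (p1 a) (size (f (y a))) = f (y a).
  by apply: (window_eq (d := y a)) => j; apply: blk1.
exists (fun a => p2 (p1 a)); split=> [a|a j d]; first by rewrite step1 stepn win.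
by rewrite -{1 2}(win a); apply: blkn.
Qed.

Lemma occurs_nth u (z : config A) : occurs u z ->
  exists k : int, forall i d, (i < size u)%N -> z (k + i%:Z) = nth d u i.
Proof.
by move=> [k zu]; exists k => i d iu; rewrite zu // (set_nth_default d).
Qed.

Lemma occurs_infix u v (z : config A) : infix u v -> occurs v z -> occurs u z.
Proof.
move=> /infixP [s [s' ->]] /occurs_nth [k zv]; exists (k + (size s)%:Z) => i iu.
rewrite -addrA -PoszD (zv _ (nth (z 0) u i)); last first.
  by rewrite !size_cat ltn_add2l ltn_addr.
by rewrite nth_cat ltnNge leq_addr /= addKn nth_cat iu (set_nth_default (z 0)).
Qed.

Lemma occurs_pair (z : config A) a : occurs [:: z a; z (a + 1)] z.
Proof. by exists a => -[|[|i]] // _; rewrite ?addr0. Qed.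

Lemma occurs_orbit_closure (x y : config A) u :
  in_orbit_closure x y -> occurs u y -> occurs u x.
Proof.
move=> xy /occurs_nth [k yu]; have [s ys] := xy (`|k|%N + size u)%N.
exists (k + s) => i iu; rewrite addrAC -ys; [exact: yu | lia].
Qed.

Lemma W_orbit_rP (x : config A) r u : W_orbit_r x r u <-> size u = r /\ occurs u x.
Proof.
split=> [[ur [y [xy occ]]]|[ur occ]].
  by split=> //; apply: occurs_orbit_closure occ.
by split=> //; exists x; split=> // N; exists 0 => m _; rewrite addr0.
Qed.

Lemma block_image_occurs f y z a : block_image f y z -> occurs (f (y a)) z.
Proof. by move=> [pos [_ blk]]; exists (pos a) => i; apply: blk. Qed.

Lemma exists_block_cover (pos : int -> int) (len : int -> nat) :
  (forall a, pos (a + 1) = pos a + (len a)%:Z) -> (forall a, (0 < len a)%N) ->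
  forall k, exists a, pos a <= k < pos (a + 1).
Proof.
move=> step len_gt0 k.
have below t : pos (- t%:Z) <= pos 0 - t%:Z.
  elim: t => [|t IH]; first by rewrite oppr0 subr0.
  have := step (- t.+1%:Z); have -> : - t.+1%:Z + 1 = - t%:Z by lia.
  by have := len_gt0 (- t.+1%:Z); move: IH; lia.
have up n b : pos b <= k < pos b + n%:Z -> exists a, pos a <= k < pos (a + 1).
  elim: n b => [|n IH] b /andP [bk kb]; first by move: bk kb; lia.
  have [kb1|b1k] := ltP k (pos (b + 1)); first by exists b; rewrite bk kb1.
  by apply: (IH (b + 1)); rewrite b1k step; have := len_gt0 b; lia.
set t := `|k - pos 0%R|%N.
have tk : pos (- t%:Z) <= k.
  by apply: le_trans (below t) _; rewrite /t abszE; lia.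
by apply: (up `|k - pos (- t%:Z)|%N.+1 (- t%:Z)); lia.
Qed.

Lemma occurs_block_image f y z u :
  block_image f y z -> (forall a, (0 < size (f a))%N) ->
  (forall a, (size u <= (size (f a)).+1)%N) -> occurs u z ->
  exists a, infix u (f (y a) ++ f (y (a + 1))).
Proof.
move=> [pos [step blk]] f_gt0 u_short /occurs_nth [k zu].
have [a /andP [ak ka]] := exists_block_cover step (fun a => f_gt0 (y a)) k.
exists a; set W := f (y a) ++ f (y (a + 1)).
set o := `|k - pos a|%N; have ko : k = pos a + o%:Z by rewrite /o; lia.
clearbody o.
have o_lt : (o < size (f (y a)))%N by move: ka; rewrite step; lia.
have u_le := u_short (y (a + 1)).
suff -> : u = take (size u) (drop o W).
  by rewrite -{2}(cat_take_drop o W) -{2}(cat_take_drop (size u) (drop o W)) infix_infix.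
apply: (@eq_from_nth _ (y a)); first by rewrite size_takel // size_drop size_cat; lia.
move=> i iu; rewrite nth_take // nth_drop -(zu i (y a) iu) ko -addrA -PoszD.
rewrite nth_cat; case: ltnP => oi; first exact: (blk a (o + i)%N (y a)).
have -> : Posz (o + i) = Posz (size (f (y a))) + Posz (o + i - size (f (y a)))%N.
  by rewrite -PoszD subnKC.
rewrite addrA -step (blk _ _ (y a)) //.
(* [set] identifies two elaborations of [a + 1] that [lia] would keep apart. *)
by set sb := size (f (y (a + 1))) in u_le *; lia.
Qed.

End Configurations.

Section Substitution.
Variables (A : finType) (S : A -> seq A).

Lemma subst_word_cons a u : subst_word S (a :: u) = S a ++ subst_word S u.
Proof. by []. Qed.

Lemma subst_word1 a : subst_word S [:: a] = S a.
Proof. by rewrite /subst_word /= cats0. Qed.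

Lemma subst_word_cat u v : subst_word S (u ++ v) = subst_word S u ++ subst_word S v.
Proof. by rewrite /subst_word map_cat flatten_cat. Qed.

Lemma subst_iterS n w : subst_iter S n.+1 w = subst_word S (subst_iter S n w).
Proof. by []. Qed.

Lemma subst_iterD m n w : subst_iter S (m + n) w = subst_iter S m (subst_iter S n w).
Proof. by rewrite /subst_iter iterD. Qed.

Lemma subst_iter_nil n : subst_iter S n [::] = [::].
Proof. by elim: n => // n IH; rewrite subst_iterS IH. Qed.

Lemma subst_iter_cat n u v :
  subst_iter S n (u ++ v) = subst_iter S n u ++ subst_iter S n v.
Proof. by elim: n => // n IH; rewrite !subst_iterS IH subst_word_cat. Qed.

Lemma subst_iter_flatten n w :
  subst_iter S n w = flatten [seq subst_iter S n [:: c] | c <- w].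
Proof.
elim: w => [|c w IH]; first by rewrite subst_iter_nil.
by rewrite -cat1s subst_iter_cat IH.
Qed.

Lemma infix_subst_iter n u v :
  infix u v -> infix (subst_iter S n u) (subst_iter S n v).
Proof. by move/infixP=> [s [s' ->]]; rewrite !subst_iter_cat infix_infix. Qed.

Lemma legal_infix u v : infix u v -> legal S v -> legal S u.
Proof. by move=> uv [n [a va]]; exists n, a; apply: infix_trans uv va. Qed.

Lemma legal_subst_iter n u : legal S u -> legal S (subst_iter S n u).
Proof.
by move=> [m [a ua]]; exists (n + m)%N, a; rewrite subst_iterD infix_subst_iter.
Qed.

Section NonErasing.
Hypothesis S_neq0 : forall a, S a != [::].

Lemma size_S_gt0 a : (0 < size (S a))%N.
Proof. by rewrite lt0n size_eq0 S_neq0. Qed.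

Lemma size_subst_word u : (size u <= size (subst_word S u))%N.
Proof.
elim: u => // a u IH; rewrite subst_word_cons /= size_cat.
by have := size_S_gt0 a; lia.
Qed.

Lemma size_subst_iter n w : (size w <= size (subst_iter S n w))%N.
Proof.
by elim: n => // n IH; rewrite subst_iterS (leq_trans IH) ?size_subst_word.
Qed.

Lemma leq_size_subst_iter m n w :
  (m <= n)%N -> (size (subst_iter S m w) <= size (subst_iter S n w))%N.
Proof. by move=> /subnK <-; rewrite subst_iterD size_subst_iter. Qed.

Section SubstConfig.
Variable y : config A.

Let pre k := [seq y (Posz i) | i <- iota 0 k].
Let suf k := [seq y (Negz i) | i <- rev (iota 0 k)].

Let preD k l : pre (k + l) = pre k ++ [seq y (Posz i) | i <- iota k l].
Proof. by rewrite /pre iotaD map_cat. Qed.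

Let sufD k l : suf (k + l) = [seq y (Negz i) | i <- rev (iota k l)] ++ suf k.
Proof. by rewrite /suf iotaD rev_cat map_cat. Qed.

Let size_pre k : size (pre k) = k.
Proof. by rewrite size_map size_iota. Qed.

Let size_suf k : size (suf k) = k.
Proof. by rewrite size_map size_rev size_iota. Qed.

Let block_start (a : int) : int :=
  match a with
  | Posz k => Posz (size (subst_word S (pre k)))
  | Negz k => - Posz (size (subst_word S (suf k.+1)))
  end.

Let block_start_step a : block_start (a + 1) = block_start a + (size (S (y a)))%:Z.
Proof.
case: a => [k|[|k]].
- have -> : Posz k + 1 = Posz k.+1 by rewrite -addn1.
  by rewrite /= -addn1 preD subst_word_cat size_cat /= subst_word1; lia.
- by rewrite /= subst_word1 addrC subrr.
- have -> : Negz k.+1 + 1 = Negz k by rewrite !NegzE; lia.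
  by rewrite /= -[k.+2]addn1 sufD subst_word_cat size_cat /= subst_word1; lia.
Qed.

Let subst_config_nonneg_block k j d : (j < size (S (y (Posz k))))%N ->
  subst_config S y (block_start (Posz k) + j%:Z) = nth d (S (y (Posz k))) j.
Proof.
move=> jlt; set L := size (subst_word S (pre k)).
have kL : (k <= L)%N by rewrite /L -{1}(size_pre k) size_subst_word.
have -> : block_start (Posz k) + j%:Z = Posz (L + j) by rewrite /= PoszD.
rewrite /subst_config.
have -> : ((L + j).+1 = k.+1 + (L + j - k))%N by lia.
rewrite -/(pre (k.+1 + (L + j - k))%N) preD -addn1 preD !subst_word_cat /=.
rewrite subst_word1 -catA nth_cat -/L ltnNge leq_addr /= addKn nth_cat jlt.
exact: set_nth_default.
Qed.

Let subst_config_neg_block k j d : (j < size (S (y (Negz k))))%N ->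
  subst_config S y (block_start (Negz k) + j%:Z) = nth d (S (y (Negz k))) j.
Proof.
move=> jlt; set L := size (subst_word S (suf k.+1)).
have LE : L = (size (S (y (Negz k))) + size (subst_word S (suf k)))%N.
  by rewrite /L -addn1 sufD subst_word_cat size_cat /= subst_word1.
have kL : (k <= size (subst_word S (suf k)))%N.
  by rewrite -{1}(size_suf k) size_subst_word.
have -> : block_start (Negz k) + j%:Z = Negz (L - j - 1)%N by rewrite /= NegzE; lia.
rewrite /subst_config.
have -> : ((L - j - 1).+1 = k.+1 + (L - j - 1 - k))%N by lia.
rewrite -/(suf (k.+1 + (L - j - 1 - k))%N) sufD subst_word_cat.
set W := subst_word S _.
rewrite nth_rev size_cat; last by lia.
have -> : (size W + L - (L - j - 1).+1 = size W + j)%N by lia.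
rewrite nth_cat ltnNge leq_addr /= addKn -addn1 sufD subst_word_cat /= subst_word1.
by rewrite nth_cat jlt; apply: set_nth_default.
Qed.

Lemma block_image_subst_config : block_image S y (subst_config S y).
Proof.
exists block_start; split=> // -[k|k] j d.
  exact: subst_config_nonneg_block.
exact: subst_config_neg_block.
Qed.

End SubstConfig.

Lemma block_image_config_iter n y :
  block_image (fun a => subst_iter S n [:: a]) y (config_iter S n y).
Proof.
elim: n => [|n IH]; first exact: block_image_id.
exact: block_image_comp IH (block_image_subst_config _).
Qed.

Lemma G_path_rcons v p w :
  G_path S v p -> G_edge S (last v p) w -> G_path S v (rcons p w).
Proof. by elim: p v => [|u p IH] v /= => [_|[vu up]] ? //; split=> //; apply: IH. Qed.

Lemma G_path_illegal v p :
  G_path S v p -> ~ legal S [:: (last v p).1; (last v p).2] ->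
  forall e, e \in v :: p -> ~ legal S [:: e.1; e.2].
Proof.
elim: p v => [|w p IH] v /=; first by move=> _ ill e; rewrite inE => /eqP ->.
move=> [[ill_v _] wp] ill_last e; rewrite inE => /orP [/eqP -> //|].
exact: IH.
Qed.

(* An illegal pair of [S^j(x)] lies in [S(c d)] for a pair [c d] of
   [S^(j-1)(x)], which is then illegal too; iterating gives a path of length
   [j] in [G(S)]. *)
Lemma illegal_pair_G_path x j w1 w2 :
  occurs [:: w1; w2] (config_iter S j x) -> ~ legal S [:: w1; w2] ->
  exists v p, [/\ occurs [:: v.1; v.2] x, G_path S v p, size p = j
                & last v p = (w1, w2)].
Proof.
elim: j w1 w2 => [|j IH] w1 w2 occ ill; first by exists (w1, w2), [::].
have short a : (size [:: w1; w2] <= (size (S a)).+1)%N by rewrite ltnS size_S_gt0.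
have [a] := occurs_block_image (block_image_subst_config _) size_S_gt0 short occ.
set c := config_iter S j x a; set d := config_iter S j x (a + 1) => w_cd.
have ill_cd : ~ legal S [:: c; d].
  move=> /(legal_subst_iter 1) leg_cd; apply: ill; apply: legal_infix w_cd _.
  by move: leg_cd; rewrite /= subst_word_cons subst_word1.
have [v [p [occ_v vp size_p last_p]]] := IH c d (occurs_pair _ a) ill_cd.
exists v, (rcons p (w1, w2)); split; rewrite ?size_rcons ?last_rcons ?size_p //.
by apply: G_path_rcons; rewrite // last_p /G_edge /= subst_word_cons subst_word1.
Qed.

Section Growth.
Hypothesis grows : exists t, forall c, (2 <= size (subst_iter S t [:: c]))%N.

(* A letter whose images stay single letters for [#|A|] steps repeats, so it
   generates a cycle of single letters, which contradicts [grows]. *)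
Lemma two_le_size_subst_iter_card a : (2 <= size (subst_iter S #|A| [:: a]))%N.
Proof.
rewrite leqNgt; apply/negP => short.
pose g j := head a (subst_iter S j [:: a]).
have single j : (j <= #|A|)%N -> subst_iter S j [:: a] = [:: g j].
  move=> jA; have := size_subst_iter j [:: a].
  have := leq_size_subst_iter [:: a] jA; move: short; rewrite /g.
  by case: (subst_iter S j [:: a]) => [|c [|]] //=; lia.
have : ~~ uniq [seq g j | j <- iota 0 #|A|.+1].
  apply/negP => /card_uniqP card_g.
  have := max_card (mem [seq g j | j <- iota 0 #|A|.+1]).
  by rewrite card_g size_map size_iota ltnn.
case/(uniqPn a) => i [j [ij]]; rewrite !size_map size_iota => jA.
have iA : (i < #|A|.+1)%N by lia.
rewrite !(nth_map 0%N) ?size_iota ?nth_iota ?add0n //.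
move=> gij; set c := g i.
have fix_c : subst_iter S (j - i) [:: c] = [:: c].
  rewrite -single; last by lia.
  by rewrite -subst_iterD subnK ?single -?gij //; lia.
have fix_ct t : subst_iter S ((j - i) * t) [:: c] = [:: c].
  by elim: t => [|t IH]; rewrite ?muln0 // mulnS subst_iterD IH fix_c.
have [t0 long] := grows.
have ji_gt0 : (0 < j - i)%N by rewrite subn_gt0.
have := leq_size_subst_iter [:: c] (leq_pmull t0 ji_gt0).
by rewrite fix_ct leqNgt long.
Qed.

Hypothesis primS : primitive S.

Lemma legal_letter a : legal S [:: a].
Proof.
have [p all_in] := primS; exists p, a.
by case/splitPr: (all_in a a) => s1 s2; rewrite -cat1s infix_infix.
Qed.

Lemma exists_legal_successor a : exists b, legal S [:: a; b].
Proof.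
have [p all_in] := primS; have [t long] := grows.
have := long a; case Et: (subst_iter S t [:: a]) => [|c1 [|c2 rest]] //= _.
have [s1 [s2 E1]] : exists s1 s2, subst_iter S p [:: c1] = s1 ++ a :: s2.
  by case/splitPr: (all_in c1 a) => s1 s2; exists s1, s2.
case E2: (subst_iter S p [:: c2]) => [|b tl].
  by have := size_subst_iter p [:: c2]; rewrite E2.
have [e [tl' He]] : exists e tl', s2 ++ b :: tl = e :: tl'.
  by case: (s2) => [|e s3]; [exists b, tl | exists e, (s3 ++ b :: tl)].
exists e, (p + t)%N, a.
rewrite subst_iterD Et subst_iter_flatten /= E1 E2 -catA cat_cons catA He.
exact: (infix_infix s1 [:: a; e] (tl' ++ _)).
Qed.

(* Each letter [a] gives a legal pair [(a, b)], so at most [#|A|^2 - #|A|]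
   pairs are illegal, while the path of [illegal_pair_G_path] visits
   [#|A|^2 - #|A| + 1] distinct illegal pairs. *)
Lemma legal_pairs_config_iter x w1 w2 : good_approximant S x ->
  occurs [:: w1; w2] (config_iter S (#|A| * #|A| - #|A|) x) -> legal S [:: w1; w2].
Proof.
move=> good occ; apply: NNPP => ill.
have [v [p [occ_v vp size_p last_p]]] := illegal_pair_G_path occ ill.
have ill_p := G_path_illegal vp (ltac:(by rewrite last_p)).
pose succ a : {b | legal S [:: a; b]} :=
  constructive_indefinite_description _ (exists_legal_successor a).
pose T := [seq (a, sval (succ a)) | a <- enum A].
have uniq_T : uniq T by rewrite map_inj_uniq ?enum_uniq // => a b [].
have uniq_pT : uniq ((v :: p) ++ T).
  rewrite cat_uniq good // uniq_T andbT; apply/hasPn => e /mapP [a _ ->].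
  by apply/negP => /ill_p; apply; exact: (svalP (succ a)).
have := max_card (mem ((v :: p) ++ T)).
rewrite (card_uniqP uniq_pT) size_cat /= size_p size_map -cardE card_prod.
by case: #|A| => // k; rewrite mulSn; lia.
Qed.

Lemma legal_of_occurs_config_iter m x u : good_approximant S x ->
  (forall a, (size u <= (size (subst_iter S m [:: a])).+1)%N) ->
  occurs u (config_iter S (m + (#|A| * #|A| - #|A|)) x) -> legal S u.
Proof.
rewrite /config_iter iterD -!/(config_iter _ _ _) => good short occ.
have [a] := occurs_block_image (block_image_config_iter m _)
  (fun a => size_subst_iter m [:: a]) short occ.
move/legal_infix; apply; rewrite -subst_iter_cat; apply: legal_subst_iter.
exact/legal_pairs_config_iter/occurs_pair.
Qed.

End Growth.

Lemma occurs_config_iter_of_legal (R : realType) (CS : R) n x u :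
  lin_rep_const S CS -> legal S u ->
  CS * (size u)%:R <= (size (subst_iter S n [:: x 0]))%:R ->
  occurs u (config_iter S n x).
Proof.
move=> rep leg long.
apply: occurs_infix (block_image_occurs 0 (block_image_config_iter n x)).
by apply: rep => //; exists n, (x 0); apply: infix_refl.
Qed.
End NonErasing.
End Substitution.

Section Estimates.
Variable R : realType.

Lemma ler_expn_ln (theta c : R) n :
  1 < theta -> 0 < c -> ln c / ln theta <= n%:R -> c <= theta ^+ n.
Proof.
move=> theta_gt1 c_gt0; have theta_gt0 : 0 < theta by apply: lt_trans theta_gt1.
rewrite ler_pdivrMr ?ln_gt0 // => lnc.
by rewrite -ler_ln ?posrE ?exprn_gt0 // lnXn // -mulr_natl.
Qed.

Lemma ltr_expn_ln (theta c : R) n :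
  1 < theta -> 0 < c -> ln c / ln theta < n%:R -> c < theta ^+ n.
Proof.
move=> theta_gt1 c_gt0; have theta_gt0 : 0 < theta by apply: lt_trans theta_gt1.
rewrite ltr_pdivrMr ?ln_gt0 // => lnc.
by rewrite -ltr_ln ?posrE ?exprn_gt0 // lnXn // -mulr_natl.
Qed.

Lemma size_flatten_ge (T U : Type) (B : R) (h : T -> seq U) (w : seq T) :
  (forall c, B <= (size (h c))%:R) ->
  (size w)%:R * B <= (size (flatten (map h w)))%:R.
Proof.
move=> hB; elim: w => [|c w IH]; first by rewrite mul0r.
by rewrite /= size_cat natrD -addn1 natrD mulrDl mul1r; have := hB c; lra.
Qed.

End Estimates.

Section SizeBounds.
Variables (R : realType) (A : finType) (S : A -> seq A) (theta Cchk : R).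
Hypotheses (theta_gt1 : 1 < theta) (Cchk_gt0 : 0 < Cchk).
Hypothesis size_ge :
  forall a n, Cchk * theta ^+ n <= (size (subst_iter S n [:: a]))%:R.

Lemma lower_const_le1 (a : A) : Cchk <= 1.
Proof. by have := size_ge a 0; rewrite expr0 mulr1. Qed.

Lemma subst_iter_grows : exists t, forall c, (2 <= size (subst_iter S t [:: c]))%N.
Proof.
have c_gt0 : 0 < 2 / Cchk by rewrite divr_gt0.
set q := ln (2 / Cchk) / ln theta; exists (Num.bound `|q|) => c.
have q_le : q <= (Num.bound `|q|)%:R.
  by apply: le_trans (ler_norm q) (ltW (archi_boundP _)).
have := ler_expn_ln theta_gt1 c_gt0 q_le; rewrite ler_pdivrMr // mulrC => le2.
by rewrite -(ler_nat R); apply: le_trans le2 (size_ge _ _).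
Qed.

Lemma rep_bound_le_size_subst_iter (CS : R) r n a : 0 < CS ->
  ln (r%:R : R) / ln theta + (ln CS - ln Cchk) / ln theta <= n%:R ->
  CS * r%:R <= (size (subst_iter S n [:: a]))%:R.
Proof.
move=> CS_gt0; case: r => [|r] hn; first by rewrite mulr0.
have c_gt0 : 0 < CS * r.+1%:R / Cchk by rewrite !mulr_gt0 ?invr_gt0 ?ltr0n.
have lnc : ln (CS * r.+1%:R / Cchk) = ln r.+1%:R + (ln CS - ln Cchk).
  by rewrite ln_div ?lnM ?posrE ?mulr_gt0 ?ltr0n //; lra.
rewrite -mulrDl -lnc in hn.
have := ler_expn_ln theta_gt1 c_gt0 hn.
by rewrite ler_pdivrMr // [_ * Cchk]mulrC => le_c; apply: le_trans le_c (size_ge _ _).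
Qed.

Hypothesis S_neq0 : forall a, S a != [::].

Lemma exists_long_blocks (a0 : A) (r n : nat) : (2 <= r)%N ->
  ln (r%:R : R) / ln theta - ln (2 * Cchk) / ln theta + (#|A| ^ 2)%:R < n%:R ->
  exists m, n = (m + (#|A| * #|A| - #|A|))%N /\
    forall a, (r <= (size (subst_iter S m [:: a])).+1)%N.
Proof.
move=> r_ge2 hn; have ln_gt0 := ln_gt0 theta_gt1.
have C2_gt0 : 0 < 2 * Cchk by rewrite mulr_gt0.
have r_ge2R : (2 : R) <= r%:R by rewrite (ler_nat R 2).
have r_gt0 : (0 : R) < r%:R by lra.
have ln_le : ln (2 * Cchk) <= ln (r%:R : R).
  by rewrite ler_ln ?posrE //; have := lower_const_le1 a0; lra.
have : 0 <= ln (r%:R : R) / ln theta - ln (2 * Cchk) / ln theta.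
  by rewrite -mulrBl divr_ge0 ?subr_ge0 // ltW.
move=> slack; have A2_lt : (#|A| ^ 2 < n)%N by rewrite -(ltr_nat R); lra.
set m0 := (n - #|A| ^ 2)%N; have m0E : m0%:R = n%:R - (#|A| ^ 2)%:R :> R.
  by rewrite natrB // ltnW.
have c_gt0 : 0 < r%:R / (2 * Cchk) :> R by rewrite divr_gt0.
have := @ltr_expn_ln R theta _ m0 theta_gt1 c_gt0.
rewrite ln_div ?posrE // mulrBl m0E ltr_pdivrMr // => /(_ ltac:(lra)) r_lt.
exists (m0 + #|A|)%N; split.
  by move: A2_lt; rewrite /m0 -mulnn; case: #|A| => [|k]; rewrite ?mulSn; lia.
move=> a; apply/leqW/ltnW; rewrite -(ltr_nat R); apply: lt_le_trans r_lt _.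
rewrite subst_iterD (subst_iter_flatten _ m0) mulrC -mulrA.
apply: le_trans (size_flatten_ge _ (size_ge ^~ m0)); apply: ler_wpM2r.
  by rewrite mulr_ge0 ?exprn_ge0 // ltW // (lt_trans ltr01).
by rewrite ler_nat (two_le_size_subst_iter_card S_neq0 subst_iter_grows).
Qed.

End SizeBounds.

Theorem mainTheorem4 (R : realType) (A : finType) (S : A -> seq A)
    (theta Cchk Chat CS : R) (r : nat) (x : config A) :
  (forall a : A, S a != [::]) ->
  primitive S ->
  is_PF_eigenvalue S theta ->
  1 < theta ->
  0 < Cchk -> 0 < Chat ->
  (forall (a : A) (n : nat),
      Cchk * theta ^+ n <= (size (subst_iter S n [:: a]))%:R <= Chat * theta ^+ n) ->
  1 <= CS -> lin_rep_const S CS ->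
  (forall n : nat,
      ln (r%:R : R) / ln theta + (ln CS - ln Cchk) / ln theta <= n%:R ->
      forall u : seq A, W_S_r S r u -> W_orbit_r (config_iter S n x) r u) /\
  (good_approximant S x ->
   forall n : nat,
      ln (r%:R : R) / ln theta - ln (2 * Cchk) / ln theta + (#|A| ^ 2)%:R < n%:R ->
      forall u : seq A, W_orbit_r (config_iter S n x) r u -> W_S_r S r u).
Proof.
move=> S_neq0 primS _ theta_gt1 Cchk_gt0 _ size_bounds CS_ge1 rep.
have size_ge a n : Cchk * theta ^+ n <= (size (subst_iter S n [:: a]))%:R.
  by case/andP: (size_bounds a n).
have grows := subst_iter_grows theta_gt1 Cchk_gt0 size_ge.
split=> [n hn u [ur leg] | good n hn u /W_orbit_rP [ur occ]].
  apply/W_orbit_rP; split=> //; apply: (occurs_config_iter_of_legal S_neq0 rep leg).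
  have CS_gt0 : 0 < CS := lt_le_trans ltr01 CS_ge1.
  by rewrite ur (rep_bound_le_size_subst_iter theta_gt1 Cchk_gt0 size_ge _ CS_gt0 hn).
split=> //; case: r ur hn => [|[|r]] ur hn.
- by move/size0nil: ur => ->; exists 0%N, (x 0); apply: infix0s.
- by case: u ur {occ} => [|b []] // _; apply: legal_letter.
- have [m [n_eq short]] :=
    exists_long_blocks theta_gt1 Cchk_gt0 size_ge S_neq0 (x 0) (isT : (2 <= r.+2)%N) hn.
  by rewrite n_eq in occ; apply: legal_of_occurs_config_iter good _ occ; rewrite ?ur.
Qed.
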